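(* Let $S$ be a monoid and $A_S$ an artinian projective right $S$-act, and let $T=\mathrm{End}(A_S)$ (a monoid under composition). Then $T$ satisfies the descending chain condition on principal right ideals $fT$, $f\in T$.
   Context: $A_S$ is artinian if its congruences satisfy the descending chain condition. $A_S$ is projective if for every surjective homomorphism $g:B\to C$ and every homomorphism $h:A\to C$ there is $k:A\to B$ with $gk=h$. In $T$, the product $fg$ denotes the composition $f\circ g$, and $fT=\{f\circ g: g\in T\}$. *)

From Stdlib Require Import Arith.

Record Monoid := {
  mcar :> Type;
  mmul : mcar -> mcar -> mcar;
  mone : mcar;
  mmulA : forall x y z, mmul x (mmul y z) = mmul (mmul x y) z;
  mmul1l : forall x, mmul mone x = x;
  mmul1r : forall x, mmul x mone = x
}.

Record RAct (S : Monoid) := {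
  acar :> Type;
  aact : acar -> S -> acar;
  aact1 : forall a, aact a (mone S) = a;
  aactM : forall a s t, aact (aact a s) t = aact a (mmul S s t)
}.
Arguments aact {S} _ _ _.

Definition is_hom {S : Monoid} (B C : RAct S) (f : B -> C) : Prop :=
  forall (b : B) (s : S), f (aact B b s) = aact C (f b) s.

Definition is_congruence {S : Monoid} (A : RAct S) (r : A -> A -> Prop) : Prop :=
  (forall a, r a a) /\ (forall a b, r a b -> r b a) /\
  (forall a b c, r a b -> r b c -> r a c) /\
  (forall a b (s : S), r a b -> r (aact A a s) (aact A b s)).

Definition artinian {S : Monoid} (A : RAct S) : Prop :=
  forall rho : nat -> A -> A -> Prop,
    (forall n, is_congruence A (rho n)) ->
    (forall n a b, rho (Nat.succ n) a b -> rho n a b) ->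
    exists N, forall n, N <= n -> forall a b, rho n a b <-> rho N a b.

Definition projective {S : Monoid} (A : RAct S) : Prop :=
  forall (B C : RAct S) (g : B -> C) (h : A -> C),
    is_hom B C g -> (forall c : C, exists b : B, g b = c) ->
    is_hom A C h ->
    exists k : A -> B, is_hom A B k /\ forall a : A, g (k a) = h a.

(* T = End(A_S), a monoid under composition; endomorphisms identified
   extensionally *)
Record Endo {S : Monoid} (A : RAct S) := {
  emap :> A -> A;
  ehom : is_hom A A emap
}.

Definition in_principal_right_ideal {S : Monoid} {A : RAct S}
  (f h : Endo A) : Prop :=
  exists g : Endo A, forall a : A, h a = f (g a).

Definition pri_sub {S : Monoid} {A : RAct S} (f' f : Endo A) : Prop :=
  forall h : Endo A, in_principal_right_ideal f' h -> in_principal_right_ideal f h.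

Definition dcc_principal_right_ideals {S : Monoid} (A : RAct S) : Prop :=
  forall f : nat -> Endo A,
    (forall n, pri_sub (f (Nat.succ n)) (f n)) ->
    exists N, forall n, N <= n -> pri_sub (f N) (f n) /\ pri_sub (f n) (f N).

(* A descending chain f_0 T >= f_1 T >= ... gives a descending chain of images
   f_0(A) >= f_1(A) >= ...  Each image I is a subact, and the Rees congruence
   rho_I (identify all elements of I) determines I as soon as I contains a
   smaller image, so since A is artinian the images stabilise.  Conversely,
   projectivity turns an inclusion of images h(A) <= f(A) back into a
   factorisation h = f o k with k in T, i.e. hT <= fT.  Hence the chain of
   principal right ideals stabilises as well. *)
From Stdlib Require Import ProofIrrelevance.

Section EndomorphismMonoid.
Context {S : Monoid} (A : RAct S).

Definition idE : Endo A := {| emap := fun a => a; ehom := fun b s => eq_refl |}.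

Lemma comp_hom (f g : Endo A) : is_hom A A (fun a => f (g a)).
Proof. intros b s. rewrite (ehom A g), (ehom A f). reflexivity. Qed.

Definition compE (f g : Endo A) : Endo A := {| emap := _; ehom := comp_hom f g |}.

Lemma in_own_principal_right_ideal (f : Endo A) : in_principal_right_ideal f f.
Proof. exists idE. reflexivity. Qed.

Lemma pri_sub_of_factor (h f : Endo A) :
  in_principal_right_ideal f h -> pri_sub h f.
Proof.
  intros [g Hg] k [g' Hg']. exists (compE g g'). intros a.
  rewrite Hg', Hg. reflexivity.
Qed.

Lemma pri_sub_trans (f g h : Endo A) : pri_sub f g -> pri_sub g h -> pri_sub f h.
Proof. intros H1 H2 k Hk. apply H2, H1, Hk. Qed.

Lemma pri_sub_chain (f : nat -> Endo A) :
  (forall n, pri_sub (f (Nat.succ n)) (f n)) ->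
  forall m n, m <= n -> pri_sub (f n) (f m).
Proof.
  intros Hch m n Hmn. induction Hmn as [|n _ IH].
  - intros h Hh; exact Hh.
  - exact (pri_sub_trans _ _ _ (Hch n) IH).
Qed.

End EndomorphismMonoid.

Section Images.
Context {S : Monoid} (A : RAct S).

Definition Im (f : A -> A) (x : A) : Prop := exists a, f a = x.

Lemma im_act (f : Endo A) x s : Im f x -> Im f (aact A x s).
Proof. intros [a Ha]. exists (aact A a s). rewrite (ehom A f). now subst. Qed.

Lemma im_incl_of_pri_sub (h f : Endo A) :
  pri_sub h f -> forall x, Im h x -> Im f x.
Proof.
  intros Hhf x [a Ha].
  destruct (Hhf h (in_own_principal_right_ideal A h)) as [g Hg].
  exists (g a). rewrite <- Hg. exact Ha.
Qed.

Definition subact_car (f : Endo A) := {x : A | Im f x}.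

Definition subact_act (f : Endo A) (x : subact_car f) (s : S) : subact_car f :=
  exist _ (aact A (proj1_sig x) s) (im_act f _ s (proj2_sig x)).

Lemma subact_eq (f : Endo A) (x y : subact_car f) : proj1_sig x = proj1_sig y -> x = y.
Proof. apply eq_sig_hprop. intros; apply proof_irrelevance. Qed.

Lemma subact_act1 (f : Endo A) x : subact_act f x (mone S) = x.
Proof. apply subact_eq. apply aact1. Qed.

Lemma subact_actM (f : Endo A) x s t :
  subact_act f (subact_act f x s) t = subact_act f x (mmul S s t).
Proof. apply subact_eq. apply aactM. Qed.

Definition Sub (f : Endo A) : RAct S :=
  {| acar := subact_car f; aact := subact_act f;
     aact1 := subact_act1 f; aactM := subact_actM f |}.

Definition into_image (f h : Endo A) (Hh : forall a, Im f (h a)) : A -> Sub f :=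
  fun a => exist _ (h a) (Hh a).

Lemma into_image_hom (f h : Endo A) (Hh : forall a, Im f (h a)) :
  is_hom A (Sub f) (into_image f h Hh).
Proof. intros b s. apply subact_eq. apply (ehom A h). Qed.

Definition corestrict (f : Endo A) : A -> Sub f :=
  into_image f f (fun a => ex_intro _ a eq_refl).

Lemma corestrict_onto (f : Endo A) : forall c : Sub f, exists a, corestrict f a = c.
Proof. intros [c [a Ha]]. exists a. apply subact_eq. exact Ha. Qed.

(* Projectivity: if h(A) <= f(A), then h factors as f o k with k in T,
   by lifting h : A -> f(A) along the surjection f : A -> f(A). *)
Lemma factor_of_im_incl (f h : Endo A) :
  projective A -> (forall a, Im f (h a)) -> in_principal_right_ideal f h.
Proof.
  intros Hproj Hh.
  destruct (Hproj A (Sub f) (corestrict f) (into_image f h Hh)) as [k [Hk Hkf]].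
  - apply into_image_hom.
  - apply corestrict_onto.
  - apply into_image_hom.
  - exists {| emap := k; ehom := Hk |}. intros a.
    exact (eq_sym (f_equal (@proj1_sig _ _) (Hkf a))).
Qed.

End Images.

Section ReesCongruences.
Context {S : Monoid} (A : RAct S).

Definition rees (f : Endo A) (a b : A) : Prop := a = b \/ (Im A f a /\ Im A f b).

Lemma rees_cong (f : Endo A) : is_congruence A (rees f).
Proof.
  unfold rees; repeat split.
  - auto.
  - intros a b [H|[H1 H2]]; [left; auto|right; auto].
  - intros a b c [H|[H1 H2]] [H'|[H1' H2']]; subst; auto.
  - intros a b s [H|[H1 H2]]; [left; subst; auto|right; split; apply im_act; auto].
Qed.

Lemma rees_mono (f g : Endo A) :
  (forall x, Im A g x -> Im A f x) -> forall a b, rees g a b -> rees f a b.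
Proof. intros Hgf a b [H|[H1 H2]]; [left|right]; auto. Qed.

(* The Rees congruence detects the subact: if g(A) <= f(A) and rho_f <= rho_g,
   then f(A) <= g(A).  Indeed x in f(A) is rho_f-related to g x in g(A). *)
Lemma im_incl_of_rees (f g : Endo A) :
  (forall x, Im A g x -> Im A f x) ->
  (forall a b, rees f a b -> rees g a b) ->
  forall x, Im A f x -> Im A g x.
Proof.
  intros Hgf Hfg x Hx.
  assert (Hgx : Im A g (g x)) by (exists x; reflexivity).
  destruct (Hfg x (g x) (or_intror (conj Hx (Hgf _ Hgx)))) as [E|[Hx' _]].
  - rewrite E. exact Hgx.
  - exact Hx'.
Qed.

Lemma artinian_images_stabilise (f : nat -> Endo A) :
  artinian A ->
  (forall n x, Im A (f (Nat.succ n)) x -> Im A (f n) x) ->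
  exists N, forall n, N <= n -> forall x, Im A (f N) x -> Im A (f n) x.
Proof.
  intros Hart Hdesc.
  destruct (Hart (fun n => rees (f n))) as [N HN].
  - intros n; apply rees_cong.
  - intros n; apply rees_mono, Hdesc.
  - exists N. intros n Hn. apply im_incl_of_rees.
    + clear HN. induction Hn as [|n _ IH]; auto.
    + intros a b. apply (HN n Hn).
Qed.

End ReesCongruences.

Theorem mainTheorem19 (S : Monoid) (A : RAct S) :
  artinian A -> projective A -> dcc_principal_right_ideals A.
Proof.
  intros Hart Hproj f Hch.
  destruct (artinian_images_stabilise A f Hart
              (fun n => im_incl_of_pri_sub A _ _ (Hch n))) as [N HN].
  exists N. intros n Hn. split.
  - (* f N (A) <= f n (A), so f N = f n o k by projectivity. *)
    apply pri_sub_of_factor, factor_of_im_incl; [exact Hproj|].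
    intros a. apply (HN n Hn). exists a; reflexivity.
  - exact (pri_sub_chain A f Hch N n Hn).
Qed.
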